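(* Consider the linear model $y=\mathbf{x}\beta_o+\varepsilon$, where $\mathbf{x}$ is a random $1\times p$ row vector with $\mathbb{E}[\mathbf{x}]=0$ and $\beta_o\in\mathbb{R}^p$ is nonrandom. Assume (i) $\mathbb{E}[\varepsilon\mid\mathbf{x}]=0$ a.s.; (ii) there exist constants $B>0$, $d>2$ such that, uniformly in $n$, $\mathbb{E}[|\varepsilon|^d\mid\mathbf{x}]\le B$ a.s., $\mathbb{E}[|\mathbf{x}\tau|^d]\le B$ and $B^{-1}\le\mathbb{E}[|\mathbf{x}\tau|^2]$ for all $\tau\in\mathcal{S}_p$. Then (a) the minimiser of $Q_o(m\delta)$ over $m\in\mathcal{M}_k$, $\delta\in\Delta$ solves the weighted clustering problem $\min_{m\in\mathcal{M}_k,\delta\in\Delta}\|m\delta-\beta_o\|^2_{\mathbb{E}[\mathbf{x}'\mathbf{x}]}$; and (b) $\|b_k\|^2\asymp\min_{m\in\mathcal{M}_k,\delta\in\Delta}\|m\delta-\beta_o\|^2_{\mathbb{E}[\mathbf{x}'\mathbf{x}]}$.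
   Context: $\|\cdot\|$ is the Euclidean norm; $\mathcal{S}_p=\{\tau\in\mathbb{R}^p:\|\tau\|=1\}$; for a positive definite $W$, $\|v\|_W^2:=v'Wv$. $\mathcal{M}_k$ ($1\le k\le p$) is the set of $p\times k$ binary matrices each of whose rows has exactly one entry $1$ (group assignment of the $p$ coordinates; column sums are group sizes), with standing condition that group sizes for every $m\in\mathcal{M}_k$ are bounded above by a constant $M$ and away from zero uniformly in $p$. $\Delta\subset\mathbb{R}^k$. $(m_o,\delta_o)$ minimises the unweighted $\|m\delta-\beta_o\|^2$ over $m\in\mathcal{M}_k,\delta\in\Delta$ and $b_k:=\beta_o-m_o\delta_o$. $Q_o(m\delta):=\mathbb{E}[(y-\mathbf{x}m\delta)^2]/p$. For nonnegative sequences, $a\lesssim b$ means $a\le cb$ for some finite $c>0$, and $a\asymp b$ means $a\lesssim b$ and $b\lesssim a$. *)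

From HB Require Import structures.
From mathcomp Require Import all_boot all_order all_algebra.
From mathcomp Require Import all_classical all_reals all_analysis.
Unset Printing Implicit Defensive.
Import Order.TTheory GRing.Theory Num.Theory.
Local Open Scope classical_set_scope.
Local Open Scope ring_scope.

Section Defs.
Context {R : realType}.

Definition sqnorm {n : nat} (v : 'cV[R]_n) : R := \sum_(i < n) (v i 0) ^+ 2.

Definition unit_sphere {n : nat} : set 'cV[R]_n := [set t | sqnorm t = 1].

Definition wsqnorm {n : nat} (W : 'M[R]_n) (v : 'cV[R]_n) : R :=
  ((v^T *m W *m v) 0 0).

Definition assignment {p k : nat} (m : 'M[R]_(p, k)) : Prop :=
  (forall i j, m i j = 0 \/ m i j = 1) /\ (forall i, \sum_(j < k) m i j = 1).

Definition Mk (p k M : nat) : set 'M[R]_(p, k) :=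
  [set m | assignment m /\
           forall j : 'I_k, 1 <= \sum_(i < p) m i j <= M%:R].

Context {d0 : measure_display} {T : measurableType d0}.

Definition xmul {p : nat} (x : 'I_p -> T -> R) (v : 'cV[R]_p) (w : T) : R :=
  \sum_(j < p) x j w * v j 0.

Definition sigma_x {p : nat} (x : 'I_p -> T -> R) : set (set T) :=
  <<s [set A | exists (j : 'I_p) (B : set R), measurable B /\ A = x j @^-1` B] >>.

Variable P : probability T R.

Definition Sigma {p : nat} (x : 'I_p -> T -> R) : 'M[R]_p :=
  \matrix_(i, j) fine (\int[P]_w (x i w * x j w)%:E).

Definition Qo {p : nat} (x : 'I_p -> T -> R) (eps : T -> R) (beta : 'cV[R]_p)
  (b : 'cV[R]_p) : R :=
  fine (\int[P]_w ((xmul x beta w + eps w - xmul x b w) ^+ 2)%:E) / p%:R.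

End Defs.

From HB Require Import structures.
From mathcomp Require Import all_boot all_order all_algebra.
From mathcomp Require Import all_classical all_reals all_analysis.
From mathcomp Require Import finmap ring lra.
Import Order.TTheory GRing.Theory Num.Theory.
Import measurable_realfun HBNNSimple.
Local Open Scope classical_set_scope.
Local Open Scope ring_scope.

(* Because E[eps | x] = 0, the error is orthogonal to every square-integrable
   function of x, in particular to x b for every b, so
   Q_o(b) = (E[eps^2] + ||b - beta_o||^2_Sigma) / p and the two minimisation
   problems of (a) coincide.  The orthogonality E[x_j eps] = 0 has to be derived
   from the hypothesis, which only controls integrals of eps over sets of sigma(x):
   after splitting eps and x_j into positive and negative parts, the identity
   E[g(x_j) eps^+] = E[g(x_j) eps^-] extends from indicators of preimages to all
   nonnegative measurable g by simple-function approximation and monotone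
   convergence.
   For (b), ||v||^2_Sigma = E[(x v)^2] lies between ||v||^2 / B and
   (1 + B) ||v||^2 (the upper bound because t^2 <= 1 + |t|^d for d >= 2), and
   comparing the weighted minimum with the unweighted minimiser (m_o, delta_o)
   gives ||b_k||^2 / B <= min <= (1 + B) ||b_k||^2. *)

Lemma inf_sandwich (R : realType) (S : set R) (a b : R) :
  (exists2 r, S r & r <= b) -> (forall r, S r -> a <= r) -> a <= inf S <= b.
Proof.
move=> [r Sr rb] Sa; apply/andP; split; first by apply: lb_le_inf; [exists r | exact: Sa].
by apply: le_trans (ge_inf _ Sr) rb; exists a.
Qed.

Lemma funrposM (T : Type) (R : realDomainType) (f g : T -> R) :
  (f \* g)^\+ = f^\+ \* g^\+ \+ f^\- \* g^\-.
Proof.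
apply/funext => w; rewrite /funrpos /funrneg /=.
by case: (leP 0 (f w)); case: (leP 0 (g w)); case: (leP 0 (- f w));
  case: (leP 0 (- g w)); case: (leP 0 (f w * g w)); nra.
Qed.

Lemma funrnegM (T : Type) (R : realDomainType) (f g : T -> R) :
  (f \* g)^\- = f^\+ \* g^\- \+ f^\- \* g^\+.
Proof.
apply/funext => w; rewrite /funrpos /funrneg /=.
by case: (leP 0 (f w)); case: (leP 0 (g w)); case: (leP 0 (- f w));
  case: (leP 0 (- g w)); case: (leP 0 (- (f w * g w))); nra.
Qed.

Section integral_funrposneg.
Context d (T : measurableType d) (R : realType) (mu : {measure set T -> \bar R}).

Lemma integral_eq0_funrposneg D (f : T -> R) : measurable D ->
  mu.-integrable D (EFin \o f) ->
  (\int[mu]_(x in D) (f x)%:E = 0)%E <->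
  (\int[mu]_(x in D) (f^\+ x)%:E = \int[mu]_(x in D) (f^\- x)%:E)%E.
Proof.
move=> mD intf; rewrite integralE funerpos funerneg.
have fneg := integrable_fin_num mD (integrable_funrneg mD intf).
split=> [h|h]; last by rewrite [X in (X - _)%E]h subee.
by rewrite -[LHS](subeK _ fneg) h add0e.
Qed.
End integral_funrposneg.

Section integral_comp_mul.
Context d (T : measurableType d) (R : realType) (mu : {measure set T -> \bar R}).
Variables (X : T -> R) (e1 e2 : T -> R).
Hypothesis mX : measurable_fun setT X.
Hypotheses (me1 : measurable_fun setT e1) (me2 : measurable_fun setT e2).
Hypotheses (e1_ge0 : forall w, 0 <= e1 w) (e2_ge0 : forall w, 0 <= e2 w).
Hypothesis integral_preimage_eq : forall B, measurable B ->
  (\int[mu]_(w in X @^-1` B) (e1 w)%:E = \int[mu]_(w in X @^-1` B) (e2 w)%:E)%E.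

Let integral_indic_mul (e : T -> R) A :
  (\int[mu]_w (\1_A w * e w)%:E = \int[mu]_(w in A) (e w)%:E)%E.
Proof.
rewrite [RHS]integral_mkcond; apply: eq_integral => w _.
by rewrite /patch indicE; case: (w \in A); rewrite ?mul1r ?mul0r.
Qed.

Let integral_nnsfun_comp_mulE (h : {nnsfun R >-> R}) (e : T -> R) :
  measurable_fun setT e -> (forall w, 0 <= e w) ->
  let s := fset_set (range h) in
  (\int[mu]_w (h (X w) * e w)%:E =
   \sum_(i < #|`s|) (s`_i)%:E * \int[mu]_(w in X @^-1` (h @^-1` [set s`_i])) (e w)%:E)%E.
Proof.
move=> me e_ge0 s.
have s_ge0 (i : 'I_#|`s|) : 0 <= s`_i.
  have : s`_i \in s by exact/mem_nth.
  by rewrite in_fset_set //= => /set_mem[w _ <-]; exact: fun_ge0.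
have mpre i : measurable (X @^-1` (h @^-1` [set s`_i])).
  by rewrite -[X in measurable X]setTI; apply: mX => //; exact: measurable_funPTI.
have hXE w : (h (X w) * e w)%:E = (\sum_(i < #|`s|)
    (s`_i)%:E * (\1_(X @^-1` (h @^-1` [set s`_i])) w * e w)%:E)%E.
  rewrite fimfunEord mulr_suml -sumEFin.
  by apply: eq_bigr => i _; rewrite -EFinM mulrA.
have mindic i : measurable_fun setT
    (fun w => (\1_(X @^-1` (h @^-1` [set s`_i])) w * e w)%:E).
  by apply/measurable_EFinP; apply: measurable_funM => //; exact: measurable_indic.
under eq_integral do rewrite hXE.
rewrite ge0_integral_sum //; last first.
- by move=> i w _; rewrite mule_ge0 ?lee_fin ?mulr_ge0.
- by move=> i; apply: measurable_funeM.
apply: eq_bigr => i _.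
rewrite ge0_integralZl_EFin //; last by move=> w _; rewrite lee_fin mulr_ge0.
by rewrite -integral_indic_mul.
Qed.

Lemma integral_comp_mul_eq (g : R -> R) :
  measurable_fun setT g -> (forall t, 0 <= g t) ->
  (\int[mu]_w (g (X w) * e1 w)%:E = \int[mu]_w (g (X w) * e2 w)%:E)%E.
Proof.
move=> mg g_ge0; have mEg : measurable_fun setT (EFin \o g) by exact/measurable_EFinP.
pose h := nnsfun_approx measurableT mEg.
have limE (e : T -> R) : measurable_fun setT e -> (forall w, 0 <= e w) ->
    (\int[mu]_w (g (X w) * e w)%:E = limn (fun n => \int[mu]_w (h n (X w) * e w)%:E))%E.
  move=> me e_ge0; rewrite -monotone_convergence //.
  - apply: eq_integral => w _; apply/esym/cvg_lim => //.
    have /fine_cvg cvg_h := cvg_nnsfun_approx measurableT mEg (fun t _ => g_ge0 t) (x := X w) Logic.I.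
    by apply/fine_cvgP; split; [exact: nearW | exact: cvgMr_tmp].
  - move=> n; apply/measurable_EFinP; apply: measurable_funM => //.
    exact: measurableT_comp (measurable_funPT _) mX.
  - by move=> n w _; rewrite lee_fin mulr_ge0.
  - move=> w _ m n mn; rewrite lee_fin ler_wpM2r //.
    by have /lefP := nd_nnsfun_approx measurableT mEg mn; apply.
rewrite (limE _ me1 e1_ge0) (limE _ me2 e2_ge0); congr (limn _); apply/funext => n.
rewrite !integral_nnsfun_comp_mulE //; apply: eq_bigr => i _.
by rewrite integral_preimage_eq //; exact: measurable_funPTI.
Qed.

End integral_comp_mul.

(* (X eps)^+ = X^+ eps^+ + X^- eps^- and (X eps)^- = X^+ eps^- + X^- eps^+, and
   integral_comp_mul_eq exchanges eps^+ and eps^- next to X^+ and to X^-. *)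
Lemma integral_mul_eq0_of_preimage_eq0 {d} {T : measurableType d} {R : realType}
    {mu : {measure set T -> \bar R}} {X eps : T -> R} :
  measurable_fun setT X -> measurable_fun setT eps ->
  mu.-integrable setT (EFin \o eps) -> mu.-integrable setT (EFin \o (X \* eps)) ->
  (forall B, measurable B -> \int[mu]_(w in X @^-1` B) (eps w)%:E = 0)%E ->
  (\int[mu]_w (X w * eps w)%:E = 0)%E.
Proof.
move=> mX meps ieps iXeps eps0.
have pre_eq B : measurable B ->
    (\int[mu]_(w in X @^-1` B) (eps^\+ w)%:E = \int[mu]_(w in X @^-1` B) (eps^\- w)%:E)%E.
  move=> mB; have mXB : measurable (X @^-1` B) by rewrite -[X in measurable X]setTI; exact: mX.
  by apply/integral_eq0_funrposneg => //; [exact: integrableS ieps | exact: eps0].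
have mid : measurable_fun [set: R] (@id R) := @measurable_id _ _ setT.
have cross (g : R -> R) : measurable_fun setT g -> (forall t, 0 <= g t) ->
    (\int[mu]_w (g (X w) * eps^\+ w)%:E = \int[mu]_w (g (X w) * eps^\- w)%:E)%E.
  move=> mg g_ge0; apply: integral_comp_mul_eq => //;
    [exact: measurable_funrpos | exact: measurable_funrneg].
have mXp := measurable_funrpos mX; have mXn := measurable_funrneg mX.
have mep := measurable_funrpos meps; have men := measurable_funrneg meps.
have mprod (f f' : T -> R) : measurable_fun setT f -> measurable_fun setT f' ->
  measurable_fun setT (fun w => (f w * f' w)%:E).
  by move=> mf mf'; apply/measurable_EFinP; exact: measurable_funM.
apply/(@integral_eq0_funrposneg _ _ _ mu setT (X \* eps) measurableT iXeps).
rewrite funrposM funrnegM /=.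
under eq_integral do rewrite EFinD.
under [RHS]eq_integral do rewrite EFinD.
rewrite !ge0_integralD //; first last.
all: try by move=> w _; rewrite lee_fin mulr_ge0 ?funrpos_ge0 ?funrneg_ge0.
all: try by apply: mprod.
congr (_ + _)%E; first exact: (cross _ (measurable_funrpos mid) (funrpos_ge0 id)).
exact/esym/(cross _ (measurable_funrneg mid) (funrneg_ge0 id)).
Qed.

Section real_integrable.
Context d (T : measurableType d) (R : realType) (mu : {measure set T -> \bar R}).

Lemma integrableZl_EFin (c : R) (f : T -> R) :
  mu.-integrable setT (EFin \o f) -> mu.-integrable setT (EFin \o (fun w => c * f w)).
Proof.
by move=> intf; apply: eq_integrable (integrableZl measurableT c intf).
Qed.

Lemma integrable_sum_EFin (I : Type) (s : seq I) (f : I -> T -> R) :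
  (forall i, mu.-integrable setT (EFin \o f i)) ->
  mu.-integrable setT (EFin \o (fun w => \sum_(i <- s) f i w)).
Proof.
move=> intf; apply: (eq_integrable measurableT _ _ _
  (integrable_sum measurableT s (P := xpredT) (h := fun i w => (f i w)%:E) (fun i _ => intf i))).
by move=> w _; rewrite sumEFin.
Qed.

Lemma Rintegral_sum (I : Type) (s : seq I) (f : I -> T -> R) :
  (forall i, mu.-integrable setT (EFin \o f i)) ->
  \int[mu]_w (\sum_(i <- s) f i w) = \sum_(i <- s) \int[mu]_w f i w.
Proof.
move=> intf; elim: s => [|i s IH].
  by under eq_Rintegral do rewrite big_nil; rewrite Rintegral_cst // mul0r big_nil.
under eq_Rintegral do rewrite big_cons.
by rewrite big_cons RintegralD // ?IH //; exact: integrable_sum_EFin.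
Qed.

Lemma integrable_mul_of_sqr (f g : T -> R) :
  measurable_fun setT f -> measurable_fun setT g ->
  mu.-integrable setT (EFin \o (fun w => f w ^+ 2)) ->
  mu.-integrable setT (EFin \o (fun w => g w ^+ 2)) ->
  mu.-integrable setT (EFin \o (fun w => f w * g w)).
Proof.
move=> mf mg intf intg.
apply: le_integrable (integrableD measurableT intf intg) => //.
  by apply/measurable_EFinP; exact: measurable_funM.
move=> w _; rewrite /= lee_fin (@ger0_norm _ (f w ^+ 2 + g w ^+ 2)) ?addr_ge0 ?sqr_ge0 //.
rewrite normrM -(real_normK (num_real (f w))) -(real_normK (num_real (g w))).
by have := sqr_ge0 (`|f w| - `|g w|); nra.
Qed.

End real_integrable.

Lemma sqr_le_powR (R : realType) (r t : R) : 2 <= r -> t ^+ 2 <= 1 + `|t| `^ r.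
Proof.
move=> r2; rewrite -real_normK ?num_real //.
have [t1|t1] := lerP `|t| 1.
  have : `|t| ^+ 2 <= 1 by rewrite expr_le1.
  by have := powR_ge0 `|t| r; lra.
rewrite -powR_mulrn //.
have : `|t| `^ 2%:R <= `|t| `^ r by apply: ler_powR => //; exact: ltW.
lra.
Qed.

Section second_moment.
Context {d} {T : measurableType d} {R : realType} {P : probability T R}.
Context {r B : R} {f : T -> R}.
Hypotheses (r2 : 2 <= r) (mf : measurable_fun setT f).
Hypothesis moment_r : (\int[P]_w (`|f w| `^ r)%:E <= B%:E)%E.

Lemma sqr_moment_le : (\int[P]_w (f w ^+ 2)%:E <= (1 + B)%:E)%E.
Proof.
have mfr : measurable_fun setT (fun w => `|f w| `^ r).
  apply: (measurableT_comp (measurable_powR _)).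
  by apply: measurableT_comp => //; exact: normr_measurable.
apply: (le_trans (ge0_le_integral _ _ _ _ (f2 := fun w => (1 + `|f w| `^ r)%:E) _ _)) => //.
- by move=> w _; rewrite lee_fin sqr_ge0.
- by apply/measurable_EFinP; exact: measurable_funX.
- by apply/measurable_EFinP; apply: measurable_funD => //; exact: measurable_cst.
- by move=> w _; rewrite lee_fin sqr_le_powR.
under eq_integral do rewrite EFinD.
rewrite ge0_integralD //; last exact/measurable_EFinP.
rewrite integral_cst // [X in (X + _)%E](_ : _ = 1%E) ?EFinD ?leeD2l //.
by rewrite mul1e; exact: probability_setT.
Qed.

Lemma integrable_sqr : P.-integrable setT (EFin \o (fun w => f w ^+ 2)).
Proof.
apply/integrableP; split; first by apply/measurable_EFinP; exact: measurable_funX.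
under eq_integral do rewrite gee0_abs ?lee_fin ?sqr_ge0 //.
exact: le_lt_trans sqr_moment_le (ltry _).
Qed.

End second_moment.

Section sqnorm.
Context {R : realType} {n : nat}.
Implicit Type v : 'cV[R]_n.

Lemma sqnorm_ge0 v : 0 <= sqnorm v.
Proof. by apply: sumr_ge0 => i _; exact: sqr_ge0. Qed.

Lemma sqnormN v : sqnorm (- v) = sqnorm v.
Proof. by apply: eq_bigr => i _; rewrite mxE sqrrN. Qed.

Lemma sqnormZ (c : R) v : sqnorm (c *: v) = c ^+ 2 * sqnorm v.
Proof. by rewrite /sqnorm mulr_sumr; apply: eq_bigr => i _; rewrite mxE exprMn. Qed.

Lemma sqnorm_eq0 v : sqnorm v = 0 -> v = 0.
Proof.
move=> /psumr_eq0P v0; apply/matrixP => i j; rewrite ord1 mxE.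
by apply/eqP; rewrite -sqrf_eq0 v0 // => k _; exact: sqr_ge0.
Qed.

Lemma sphere_decomposition v :
  v = 0 \/ exists2 tau, unit_sphere tau & v = Num.sqrt (sqnorm v) *: tau.
Proof.
have [/sqnorm_eq0 ->|v0] := eqVneq (sqnorm v) 0; [by left | right].
have s_gt0 : 0 < Num.sqrt (sqnorm v) by rewrite sqrtr_gt0 lt_def v0 sqnorm_ge0.
exists ((Num.sqrt (sqnorm v))^-1 *: v); last by rewrite scalerA divff ?gt_eqF ?scale1r.
by rewrite /unit_sphere /= sqnormZ exprVn sqr_sqrtr ?sqnorm_ge0 ?mulVf.
Qed.

End sqnorm.

Section linear_index.
Context {d} {T : measurableType d} {R : realType} {p : nat} {x : 'I_p -> T -> R}.

Lemma xmulB u v w : xmul x (u - v) w = xmul x u w - xmul x v w.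
Proof. by rewrite /xmul -sumrB; apply: eq_bigr => j _; rewrite !mxE mulrBr. Qed.

Lemma xmulZ c v w : xmul x (c *: v) w = c * xmul x v w.
Proof. by rewrite /xmul mulr_sumr; apply: eq_bigr => j _; rewrite !mxE mulrCA. Qed.

Lemma xmul0 w : xmul x 0 w = 0.
Proof. by rewrite /xmul big1 // => j _; rewrite mxE mulr0. Qed.

Lemma xmul_delta j w : xmul x (delta_mx j 0) w = x j w.
Proof.
rewrite /xmul (bigD1 j) //= mxE !eqxx mulr1 big1 ?addr0 // => i ij.
by rewrite mxE (negbTE ij) mulr0.
Qed.

Lemma xmul_sqrE v w : xmul x v w ^+ 2 =
  \sum_(k < p) \sum_(i < p) (v i 0 * v k 0) * (x i w * x k w).
Proof.
rewrite expr2 /xmul mulr_suml exchange_big /=; apply: eq_bigr => k _.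
by rewrite mulr_sumr; apply: eq_bigr => i _; ring.
Qed.

Lemma sigma_x_preimage j B : measurable B -> sigma_x x (x j @^-1` B).
Proof. by move=> mB; apply: sub_sigma_algebra; exists j, B. Qed.

Lemma sigma_x_setT : sigma_x x setT.
Proof.
have [sx0 sxC _] := smallest_sigma_algebra setT
  [set A | exists (j : 'I_p) (B : set R), measurable B /\ A = x j @^-1` B].
by move: (sxC _ sx0); rewrite setD0.
Qed.

Hypothesis mx : forall j, measurable_fun setT (x j).

Lemma measurable_xmul v : measurable_fun setT (xmul x v).
Proof. by apply: measurable_sum => j; apply: measurable_funM. Qed.

End linear_index.

Section linear_model.
Context {d} {T : measurableType d} {R : realType} {P : probability T R}.
Context {B r : R} {p : nat} {x : 'I_p -> T -> R}.
Hypothesis r2 : 2 <= r.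
Hypothesis mx : forall j, measurable_fun setT (x j).
Hypothesis xmul_moment_r : forall tau, unit_sphere tau ->
  (\int[P]_w (`|xmul x tau w| `^ r)%:E <= B%:E)%E.
Hypothesis xmul_moment_2 : forall tau, unit_sphere tau ->
  ((B^-1)%:E <= \int[P]_w ((xmul x tau w) ^+ 2)%:E)%E.

Let xmul_sqrZ v tau : v = Num.sqrt (sqnorm v) *: tau ->
  forall w, xmul x v w ^+ 2 = sqnorm v * xmul x tau w ^+ 2.
Proof. by move=> {1}-> w; rewrite xmulZ exprMn sqr_sqrtr ?sqnorm_ge0. Qed.

Lemma integrable_xmul_sqr v : P.-integrable setT (EFin \o (fun w => xmul x v w ^+ 2)).
Proof.
have [->|[tau tau1 vE]] := sphere_decomposition v.
  by under eq_fun do rewrite xmul0 expr0n; exact: integrable0.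
under eq_fun do rewrite (xmul_sqrZ _ _ vE).
apply: integrableZl_EFin.
exact: integrable_sqr r2 (measurable_xmul mx tau) (xmul_moment_r _ tau1).
Qed.

Let integrable_x_sqr j : P.-integrable setT (EFin \o (fun w => x j w ^+ 2)).
Proof.
apply: eq_integrable (integrable_xmul_sqr (delta_mx j 0)) => // w _.
by rewrite /= xmul_delta.
Qed.

Let integrable_xx i k : P.-integrable setT (EFin \o (fun w => x i w * x k w)).
Proof. exact: integrable_mul_of_sqr. Qed.

Lemma wsqnorm_Sigma v : wsqnorm (Sigma P x) v = \int[P]_w (xmul x v w ^+ 2).
Proof.
under eq_Rintegral do rewrite xmul_sqrE.
rewrite Rintegral_sum => [|k]; last first.
  by apply: integrable_sum_EFin => i; apply: integrableZl_EFin.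
rewrite /wsqnorm mxE; apply: eq_bigr => k _.
rewrite Rintegral_sum => [|i]; last exact: integrableZl_EFin.
rewrite mxE mulr_suml; apply: eq_bigr => i _.
by rewrite RintegralZl // !mxE /Rintegral; ring.
Qed.

Lemma wsqnorm_Sigma_bounds v :
  sqnorm v / B <= wsqnorm (Sigma P x) v <= (1 + B) * sqnorm v.
Proof.
rewrite wsqnorm_Sigma.
have [->|[tau tau1 vE]] := sphere_decomposition v.
  under eq_Rintegral do rewrite xmul0 expr0n.
  by rewrite Rintegral_cst // !mul0r /sqnorm big1 ?mul0r ?mulr0 ?lexx // => i _; rewrite mxE expr0n.
under eq_Rintegral do rewrite (xmul_sqrZ _ _ vE).
have int_tau := integrable_sqr r2 (measurable_xmul mx tau) (xmul_moment_r _ tau1).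
rewrite RintegralZl //; move: (xmul_moment_2 _ tau1).
have := sqr_moment_le r2 (measurable_xmul mx tau) (xmul_moment_r _ tau1).
rewrite -(fineK (integrable_fin_num measurableT int_tau)) !lee_fin => ub lb.
rewrite /Rintegral; apply/andP; split; first by rewrite ler_wpM2l ?sqnorm_ge0.
by rewrite mulrC ler_wpM2r ?sqnorm_ge0.
Qed.

Context {eps : T -> R}.
Hypotheses (meps : measurable_fun setT eps) (ieps : P.-integrable setT (EFin \o eps)).
Hypothesis eps_cond_mean0 : forall A, sigma_x x A -> (\int[P]_(w in A) (eps w)%:E = 0)%E.
Hypothesis eps_cond_moment_r : forall A, sigma_x x A ->
  (\int[P]_(w in A) (`|eps w| `^ r)%:E <= B%:E * P A)%E.

Lemma integrable_eps_sqr : P.-integrable setT (EFin \o (fun w => eps w ^+ 2)).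
Proof.
apply: (integrable_sqr r2 meps); apply: le_trans (eps_cond_moment_r _ sigma_x_setT) _.
by rewrite probability_setT mule1.
Qed.

Lemma Rintegral_xmul_eps v : \int[P]_w (xmul x v w * eps w) = 0.
Proof.
have integrable_x_eps j : P.-integrable setT (EFin \o (fun w => x j w * eps w)).
  exact: integrable_mul_of_sqr integrable_eps_sqr.
have xmul_epsE w : xmul x v w * eps w = \sum_(j < p) v j 0 * (x j w * eps w).
  by rewrite /xmul mulr_suml; apply: eq_bigr => j _; ring.
under eq_Rintegral do rewrite xmul_epsE.
rewrite Rintegral_sum => [|j]; last exact: integrableZl_EFin.
apply: big1 => j _; rewrite RintegralZl //.
rewrite /Rintegral (integral_mul_eq0_of_preimage_eq0 (mx j) meps ieps (integrable_x_eps j)).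
  by rewrite mulr0.
by move=> S mS; apply: eps_cond_mean0; exact: sigma_x_preimage.
Qed.

Lemma Rintegral_sqr_sub_xmul v : \int[P]_w ((eps w - xmul x v w) ^+ 2) =
  \int[P]_w (eps w ^+ 2) + wsqnorm (Sigma P x) v.
Proof.
have integrable_xmul_eps : P.-integrable setT (EFin \o (fun w => xmul x v w * eps w)).
  exact: integrable_mul_of_sqr (measurable_xmul mx v) meps
    (integrable_xmul_sqr v) integrable_eps_sqr.
rewrite (eq_Rintegral _ (g := fun w => (eps w ^+ 2 + xmul x v w ^+ 2) -
                               2 * (xmul x v w * eps w))) => [|w _]; last by ring.
rewrite RintegralB //; last 2 first.
- by apply: eq_integrable (integrableD measurableT integrable_eps_sqr (integrable_xmul_sqr v)).
- exact: integrableZl_EFin.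
rewrite RintegralD //; [|exact: integrable_eps_sqr | exact: integrable_xmul_sqr].
by rewrite RintegralZl // Rintegral_xmul_eps mulr0 subr0 wsqnorm_Sigma.
Qed.

Lemma Qo_wsqnormE beta b : Qo P x eps beta b =
  (\int[P]_w (eps w ^+ 2) + wsqnorm (Sigma P x) (b - beta)) / p%:R.
Proof.
rewrite -Rintegral_sqr_sub_xmul /Qo /Rintegral; congr (fine _ / _).
by apply: eq_integral => w _; rewrite xmulB; congr (_%:E); ring.
Qed.

End linear_model.

Theorem proposition2 (R : realType) (B d : R) (M : nat) :
  0 < B -> 2 < d ->
  exists c : R, 0 < c /\
  forall (d0 : measure_display) (T : measurableType d0) (P : probability T R)
    (p k : nat) (x : 'I_p -> T -> R) (eps : T -> R) (beta : 'cV[R]_p)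
    (Delta : set 'cV[R]_k),
    (1 <= k)%N -> (k <= p)%N ->
    (* x measurable, integrable, mean zero *)
    (forall j, measurable_fun setT (x j)) ->
    (forall j, P.-integrable setT (fun w => (x j w)%:E)) ->
    (forall j, (\int[P]_w (x j w)%:E = 0)%E) ->
    measurable_fun setT eps ->
    (* (i) E[eps | x] = 0 a.s. *)
    P.-integrable setT (fun w => (eps w)%:E) ->
    (forall A, sigma_x x A -> (\int[P]_(w in A) (eps w)%:E = 0)%E) ->
    (* (ii) E[|eps|^d | x] <= B a.s. *)
    (forall A, sigma_x x A ->
       (\int[P]_(w in A) (`|eps w| `^ d)%:E <= B%:E * P A)%E) ->
    (* E|x tau|^d <= B and B^-1 <= E|x tau|^2 for tau in S_p *)
    (forall tau, unit_sphere tau ->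
       (\int[P]_w (`|xmul x tau w| `^ d)%:E <= B%:E)%E) ->
    (forall tau, unit_sphere tau ->
       ((B^-1)%:E <= \int[P]_w ((xmul x tau w) ^+ 2)%:E)%E) ->
    (* (a) a minimiser of Q_o over M_k x Delta solves the weighted problem *)
    (forall m delta, Mk p k M m -> Delta delta ->
       (forall m' delta', Mk p k M m' -> Delta delta' ->
          Qo P x eps beta (m *m delta) <= Qo P x eps beta (m' *m delta')) ->
       (forall m' delta', Mk p k M m' -> Delta delta' ->
          wsqnorm (Sigma P x) (m *m delta - beta)
            <= wsqnorm (Sigma P x) (m' *m delta' - beta)))
    /\
    (* (b) ||b_k||^2 asymp min weighted objective, constants uniform *)
    (forall mo deltao, Mk p k M mo -> Delta deltao ->
       (forall m delta, Mk p k M m -> Delta delta ->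
          sqnorm (mo *m deltao - beta) <= sqnorm (m *m delta - beta)) ->
       let bk := beta - mo *m deltao in
       let wmin := inf [set r | exists m delta, Mk p k M m /\ Delta delta /\
                          r = wsqnorm (Sigma P x) (m *m delta - beta)] in
       c^-1 * sqnorm bk <= wmin /\ wmin <= c * sqnorm bk).
Proof.
move=> B_gt0 d_gt2; exists (1 + B); split; first lra.
move=> d0 T P p k x eps beta Delta k_ge1 k_le_p mx _ _ meps ieps eps_mean0 eps_moment
  x_moment_d x_moment_2.
have d_ge2 : 2 <= d by exact: ltW.
have p_gt0 : 0 < p%:R :> R by rewrite ltr0n (leq_trans k_ge1 k_le_p).
have Qo_wsqnormE b : Qo P x eps beta b =
    (\int[P]_w (eps w ^+ 2) + wsqnorm (Sigma P x) (b - beta)) / p%:R.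
  exact (Qo_wsqnormE d_ge2 mx x_moment_d meps ieps eps_mean0 eps_moment beta b).
have bounds v : sqnorm v / B <= wsqnorm (Sigma P x) v <= (1 + B) * sqnorm v.
  exact (wsqnorm_Sigma_bounds d_ge2 mx x_moment_d x_moment_2 v).
split=> [m delta _ _ Qo_min m' delta' Mm' Ddelta'|mo deltao Mmo Ddeltao mo_min bk wmin].
  by have := Qo_min m' delta' Mm' Ddelta'; rewrite !Qo_wsqnormE ler_pM2r ?invr_gt0 // lerD2l.
have bkE : sqnorm bk = sqnorm (mo *m deltao - beta) by rewrite /bk -opprB sqnormN.
have /andP[lb ub] : sqnorm bk / B <= wmin <= (1 + B) * sqnorm bk.
  rewrite bkE; apply: inf_sandwich.
    exists (wsqnorm (Sigma P x) (mo *m deltao - beta)); first by exists mo, deltao.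
    by have /andP[] := bounds (mo *m deltao - beta).
  move=> _ [m [delta [Mm [Ddelta ->]]]]; have /andP[+ _] := bounds (m *m delta - beta).
  by apply: le_trans; rewrite ler_pM2r ?invr_gt0 //; exact: mo_min.
split=> //; apply: le_trans lb; rewrite mulrC ler_wpM2l ?sqnorm_ge0 //.
by rewrite lef_pV2 ?posrE; lra.
Qed.
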